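(* Let $m\ge 1$ and $k\ge 2$. The coefficients $a_{k,l,r}$ satisfy, for all integers $l\ge 0$, $$a_{k,l,r}=a_{k-1,l-1,r+1}-(m-r-1)\,a_{k,l,r+1}\qquad(0\le r\le m-1),$$ $$a_{k,l,m}=a_{k-1,l,0}-m\,a_{k,l+1,0}.$$
   Context: Falling factorials are $(y)^{\underline 0}=1$ and $(y)^{\underline j}=y(y-1)\cdots(y-j+1)$. For $k\ge1$ let $q_k=\lfloor mk/(m+1)\rfloor$. The reals $a_{k,0,m}$ and $a_{k,l,r}$ ($1\le l\le q_k$, $0\le r\le m$) are the unique coefficients with $$\big((x-1)^{\underline m}\big)^k=a_{k,0,m}(x-1)^{\underline m}+\sum_{l=1}^{q_k}\sum_{r=0}^m a_{k,l,r}\big((x)^{\underline{m+1}}\big)^l(x+r-m-1)^{\underline r}$$ in $\mathbb{R}[x]$. By convention, $a_{k,l,r}=0$ for all index triples not covered by this expansion, namely when $l<0$, when $l>q_k$, or when $l=0$ and $r\neq m$. *)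

From mathcomp Require Import all_boot all_order all_algebra.
From mathcomp Require Import reals.
Set Implicit Arguments. Unset Strict Implicit. Unset Printing Implicit Defensive.
Import Order.TTheory GRing.Theory Num.Theory.
Local Open Scope ring_scope.

Definition ffall (R : ringType) (p : {poly R}) (j : nat) : {poly R} :=
  \prod_(i < j) (p - (i%:R)%:P).

Definition qk (m k : nat) : nat := (m * k) %/ m.+1.

(* a : int -> nat -> R is the coefficient family a_{k,l,r} (l may be negative).
   [is_coef_family m k a] says: a satisfies the zero conventions outside the
   index range of the expansion, and the expansion identity holds in R[x]. *)
Definition is_coef_family (R : realType) (m k : nat) (a : int -> nat -> R) : Prop :=
  [/\ (forall (l : int) r, l < 0 -> a l r = 0),
      (forall (l : nat) r, (qk m k < l)%N -> a l%:Z r = 0),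
      (forall r, r != m -> a 0 r = 0),
      (forall (l : int) r, (m < r)%N -> a l r = 0) &
      ffall ('X - 1) m ^+ k =
        (a 0 m)%:P * ffall ('X - 1) m
        + \sum_(1 <= l < (qk m k).+1) \sum_(r < m.+1)
            (a l%:Z r)%:P * (ffall 'X m.+1) ^+ l
              * ffall ('X + (r%:R)%:P - (m.+1%:R)%:P) r].

(* Write P = (x-1)^(m), F = x^(m+1) = x P and G_r = (x+r-m-1)^(r) (falling
   factorials).  The products F^l G_r (0 <= r <= m) are monic of the pairwise
   distinct degrees l(m+1) + r, so coefficients of expansions in them are
   unique.  Since G_(r+1) + (m-r) G_r = x G_r, we have
   P (G_(r+1) + (m-r) G_r) = F G_r; hence P times the expansion with
   coefficients a_(k,l+1,s-1) + (m-s) a_(k,l+1,s) (s >= 1) and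
   a_(k,l,m) + m a_(k,l+1,0) (s = 0) is the expansion of P^k.  Cancelling P
   against P^k = P P^(k-1) identifies these with the a_(k-1,l,s). *)

From mathcomp Require Import all_boot all_order all_algebra.
From mathcomp Require Import reals.
From mathcomp Require Import ring zify.
Set Implicit Arguments.
Unset Strict Implicit.
Unset Printing Implicit Defensive.

Import Order.TTheory GRing.Theory Num.Theory.
Local Open Scope ring_scope.

Section FallingFactorial.
Variable R : nzRingType.

Lemma ffall0 (p : {poly R}) : ffall p 0 = 1.
Proof. by rewrite /ffall big_ord0. Qed.

Lemma ffallS (p : {poly R}) j : ffall p j.+1 = p * ffall (p - 1) j.
Proof.
rewrite /ffall big_ord_recl subr0; congr (_ * _); apply: eq_bigr => i _.
by rewrite lift0 /= -natr1 rmorphD rmorph1 opprD addrA addrAC.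
Qed.

Lemma XaddC_sub1 (c : R) : 'X + c%:P - 1 = 'X + (c - 1)%:P.
Proof. by rewrite rmorphB rmorph1 addrA. Qed.

Lemma ffallXaddC_monic (c : R) j : ffall ('X + c%:P) j \is monic.
Proof.
elim: j c => [|j IHj] c; first by rewrite ffall0 monic1.
by rewrite ffallS monicMl ?monicXaddC // XaddC_sub1.
Qed.

Lemma size_ffallXaddC (c : R) j : size (ffall ('X + c%:P) j) = j.+1.
Proof.
elim: j c => [|j IHj] c; first by rewrite ffall0 size_poly1.
rewrite ffallS XaddC_sub1 size_monicM ?monicXaddC ?monic_neq0 //.
  by rewrite size_XaddC IHj.
exact: ffallXaddC_monic.
Qed.

End FallingFactorial.

Lemma sum_monic_graded_eq0 (R : nzRingType) (h : nat -> {poly R}) (c : nat -> R) N :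
  (forall n, h n \is monic) -> (forall n, size (h n) = n.+1) ->
  \sum_(n < N) (c n)%:P * h n = 0 -> forall n, (n < N)%N -> c n = 0.
Proof.
move=> h_monic h_size; elim: N => [|N IHN] // sum_eq0 n.
rewrite big_ord_recr /= in sum_eq0.
have cN0 : c N = 0.
  have := congr1 (fun p : {poly R} => p`_N) sum_eq0.
  rewrite coef0 coefD coefCM coef_sum big1 ?add0r => [|i _]; last first.
    by rewrite coefCM nth_default ?mulr0 // h_size.
  by have /monicP := h_monic N; rewrite lead_coefE h_size => ->; rewrite mulr1.
rewrite cN0 mul0r addr0 in sum_eq0.
by rewrite ltnS leq_eqVlt => /orP[/eqP -> // | ]; apply: IHN.
Qed.

Lemma big_ord_mul_divmod (T : Type) (idx : T) (op : Monoid.law idx)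
    (f : nat -> nat -> T) L M : (0 < M)%N ->
  \big[op/idx]_(l < L) \big[op/idx]_(r < M) f l r =
  \big[op/idx]_(n < L * M) f (n %/ M)%N (n %% M)%N.
Proof.
move=> M_gt0; elim: L => [|L IHL]; first by rewrite mul0n !big_ord0.
rewrite big_ord_recr /= IHL mulSn addnC big_split_ord /=; congr (op _ _).
by apply: eq_bigr => i _; rewrite divnMDl // divn_small // addn0 modnMDl modn_small.
Qed.

Section Expansion.
Variables (R : idomainType) (m : nat).

Local Notation P := (ffall ('X - 1 : {poly R}) m).
Local Notation F := (ffall ('X : {poly R}) m.+1).
Local Notation G r := (ffall ('X + (r%:R)%:P - (m.+1%:R)%:P : {poly R}) r).

Lemma P_monic : P \is monic.
Proof. by rewrite (_ : 'X - 1 = 'X + (-1)%:P) ?ffallXaddC_monic // polyCN polyC1. Qed.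

Lemma F_monic : F \is monic.
Proof. by rewrite -[X in ffall X]addr0 -polyC0 ffallXaddC_monic. Qed.

Lemma size_F : size F = m.+2.
Proof. by rewrite -[X in ffall X]addr0 -polyC0 size_ffallXaddC. Qed.

Lemma G_monic r : G r \is monic.
Proof. by rewrite -addrA -rmorphB ffallXaddC_monic. Qed.

Lemma size_G r : size (G r) = r.+1.
Proof. by rewrite -addrA -rmorphB size_ffallXaddC. Qed.

Lemma size_F_exp q : size (F ^+ q) = (q * m.+1).+1.
Proof.
elim: q => [|q IHq]; first by rewrite expr0 size_poly1.
rewrite exprS size_monicM ?F_monic ?monic_neq0 ?monic_exp ?F_monic // IHq size_F mulSn; lia.
Qed.

Lemma FE : F = 'X * P.
Proof. exact: ffallS. Qed.

Lemma GmE : G m = P.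
Proof. by congr ffall; rewrite -natr1 rmorphD rmorph1 opprD addrA addrK. Qed.

Lemma G_succ_add r : G r.+1 + (m%:R - r%:R)%:P * G r = 'X * G r.
Proof.
have shift : 'X + (r.+1%:R)%:P - (m.+1%:R)%:P - 1 = 'X + (r%:R)%:P - (m.+1%:R)%:P :> {poly R}.
  by ring.
by rewrite ffallS shift -mulrDl; congr (_ * _); ring.
Qed.

Definition Gcomb (c : nat -> R) := \sum_(r < m.+1) (c r)%:P * G r.

Definition expansion (c : nat -> nat -> R) L := \sum_(l < L) F ^+ l * Gcomb (c l).

Definition cofactor_coef (c : nat -> nat -> R) l s :=
  (if s is j.+1 then c l.+1 j else c l m) + (m%:R - s%:R) * c l.+1 s.

Lemma Gcomb_recr (c : nat -> R) :
  Gcomb c = \sum_(r < m) (c r)%:P * G r + (c m)%:P * G m.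
Proof. exact: big_ord_recr. Qed.

Lemma Gcomb_cofactor_coef c l :
  Gcomb (cofactor_coef c l) =
  (c l m)%:P + \sum_(r < m) (c l.+1 r)%:P * (G r.+1 + (m%:R - r%:R)%:P * G r).
Proof.
rewrite /Gcomb /cofactor_coef; under eq_bigr do rewrite rmorphD mulrDl.
rewrite big_split /= big_ord_recl big_ord_recr /= subrr mul0r rmorph0 mul0r !addr0.
rewrite ffall0 mulr1 -addrA -big_split; congr (_ + _); apply: eq_bigr => i _.
by rewrite add0n rmorphM /=; ring.
Qed.

Lemma mul_P_Gcomb_cofactor_coef c l :
  P * (F ^+ l * Gcomb (cofactor_coef c l)) =
  F ^+ l * ((c l m)%:P * G m) + F ^+ l.+1 * \sum_(r < m) (c l.+1 r)%:P * G r.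
Proof.
rewrite Gcomb_cofactor_coef GmE !mulrDr !mulr_sumr; congr (_ + _); first by ring.
by apply: eq_bigr => r _; rewrite G_succ_add FE exprS; ring.
Qed.

Lemma mul_P_expansion c L :
  (forall r, (r < m)%N -> c 0%N r = 0) -> (forall r, c L r = 0) ->
  P * expansion (cofactor_coef c) L = expansion c L.+1.
Proof.
move=> c0_eq0 cL_eq0; rewrite /expansion mulr_sumr.
under eq_bigr do rewrite mul_P_Gcomb_cofactor_coef.
under [RHS]eq_bigr do rewrite Gcomb_recr mulrDr.
rewrite !big_split /= addrC; congr (_ + _).
- rewrite [RHS]big_ord_recl.
  have -> : \sum_(r < m) (c 0%N r)%:P * G r = 0.
    by rewrite big1 // => r _; rewrite c0_eq0 // rmorph0 mul0r.
  rewrite mulr0 add0r.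
  by apply: eq_bigr => l _; rewrite lift0.
- by rewrite [RHS]big_ord_recr /= cL_eq0 rmorph0 mul0r mulr0 addr0.
Qed.

Lemma expansion_widen c L n :
  (forall l r, (L <= l)%N -> c l r = 0) -> expansion c (L + n) = expansion c L.
Proof.
move=> c_eq0; elim: n => [|n IHn]; first by rewrite addn0.
rewrite addnS /expansion big_ord_recr /= -/(expansion c (L + n)) IHn.
by rewrite /Gcomb big1 ?mulr0 ?addr0 // => r _; rewrite c_eq0 ?leq_addr // rmorph0 mul0r.
Qed.

Lemma expansion_inj c d L : expansion c L = expansion d L ->
  forall l r, (l < L)%N -> (r <= m)%N -> c l r = d l r.
Proof.
move=> /eqP; rewrite -subr_eq0 => /eqP cd_eq0 l r lL rm; apply/eqP; rewrite -subr_eq0.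
pose e n := c (n %/ m.+1)%N (n %% m.+1)%N - d (n %/ m.+1)%N (n %% m.+1)%N.
pose h n := F ^+ (n %/ m.+1) * G (n %% m.+1).
have h_monic n : h n \is monic.
  by rewrite monicMl ?monic_exp ?F_monic ?G_monic.
have h_size n : size (h n) = n.+1.
  rewrite size_monicM ?monic_exp ?F_monic ?monic_neq0 ?G_monic // size_G.
  by rewrite size_F_exp addSn /= addnS -divn_eq.
have sum_e : \sum_(n < L * m.+1) (e n)%:P * h n = 0.
  rewrite -[RHS]cd_eq0 /expansion -sumrB.
  transitivity (\sum_(l < L) \sum_(r < m.+1) (c l r - d l r)%:P * (F ^+ l * G r)).
    by rewrite (big_ord_mul_divmod _ (fun l r => (c l r - d l r)%:P * (F ^+ l * G r))).
  apply: eq_bigr => i _; rewrite -mulrBr /Gcomb -sumrB mulr_sumr.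
  by apply: eq_bigr => j _; rewrite rmorphB /=; ring.
have lr_lt : (l * m.+1 + r < L * m.+1)%N by nia.
have := sum_monic_graded_eq0 h_monic h_size sum_e lr_lt.
by rewrite /e divnMDl // divn_small // addn0 modnMDl modn_small // => ->.
Qed.

End Expansion.

Section CoefFamily.
Variables (R : realType) (m : nat).

Local Notation P := (ffall ('X - 1 : {poly R}) m).

Lemma coef_family_expansion k (a : int -> nat -> R) : is_coef_family m k a ->
  forall L, (qk m k < L)%N -> P ^+ k = expansion m (fun l r => a l%:Z r) L.
Proof.
case=> _ a_big a_0 _ a_expansion L qk_lt.
rewrite -(subnKC qk_lt) expansion_widen; last exact: a_big.
rewrite a_expansion /expansion big_ord_recl expr0 mul1r; congr (_ + _).
  rewrite Gcomb_recr big1 ?add0r ?GmE // => r _.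
  by rewrite a_0 ?rmorph0 ?mul0r // neq_ltn ltn_ord.
rewrite big_add1 /= big_mkord; apply: eq_bigr => l _.
by rewrite /Gcomb mulr_sumr; apply: eq_bigr => r _; ring.
Qed.

Lemma cofactor_coef_family k (a b : int -> nat -> R) : (0 < k)%N ->
  is_coef_family m k a -> is_coef_family m k.-1 b ->
  forall (l s : nat), (s <= m)%N -> b l s = cofactor_coef m (fun l r => a l%:Z r) l s.
Proof.
move=> k_gt0 a_fam b_fam l s s_le_m.
have [_ a_big a_0 _ _] := a_fam.
pose L := (l + qk m k).+1.
have qk_pred : (qk m k.-1 <= qk m k)%N by rewrite leq_div2r // leq_mul2l leq_pred orbT.
have a_exp : P ^+ k = expansion m (fun l r => a l%:Z r) L.+1.
  by apply: (coef_family_expansion a_fam); rewrite /L; lia.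
have b_exp : P ^+ k.-1 = expansion m (fun l r => b l%:Z r) L.
  by apply: (coef_family_expansion b_fam); rewrite /L; lia.
have a_cofactor : P * expansion m (cofactor_coef m (fun l r => a l%:Z r)) L =
                  expansion m (fun l r => a l%:Z r) L.+1.
  apply: mul_P_expansion => [r r_lt | r]; first by rewrite a_0 // neq_ltn r_lt.
  by rewrite a_big /L //; lia.
have exp_eq : expansion m (fun l r => b l%:Z r) L =
              expansion m (cofactor_coef m (fun l r => a l%:Z r)) L.
  apply: (mulfI (monic_neq0 (P_monic R m))).
  by rewrite a_cofactor -a_exp -b_exp -exprS prednK.
by apply: (expansion_inj exp_eq); rewrite /L; lia.
Qed.

End CoefFamily.

Theorem lemma7p2 (R : realType) (m k : nat) (a b : int -> nat -> R) :
  (1 <= m)%N -> (2 <= k)%N ->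
  is_coef_family m k a -> is_coef_family m k.-1 b ->
  forall l : int, 0 <= l ->
    (forall r : nat, (r <= m - 1)%N ->
        a l r = b (l - 1) r.+1 - (m - r - 1)%:R * a l r.+1)
    /\ a l m = b l 0%N - m%:R * a (l + 1) 0%N.
Proof.
move=> m_gt0 k_ge2 a_fam b_fam [] // n _.
have b_cofactor := cofactor_coef_family (ltnW k_ge2) a_fam b_fam.
split=> [r r_le|]; last first.
  by rewrite b_cofactor // /cofactor_coef subr0 -PoszD addn1 addrK.
case: n => [|n].
  have [_ _ a_0 _ _] := a_fam; have [b_neg _ _ _ _] := b_fam.
  have r_lt_m : (r < m)%N by lia.
  rewrite a_0 ?b_neg ?neq_ltn ?r_lt_m //.
  have [<-|r1_ne_m] := eqVneq r.+1 m; first by rewrite subSnn subnn mul0r subr0.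
  by rewrite a_0 // mulr0 subr0.
have -> : n.+1%:Z - 1 = n by rewrite -addn1 PoszD addrK.
rewrite b_cofactor /cofactor_coef; last by lia.
by rewrite -subnDA addn1 natrB; [ring | lia].
Qed.
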